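(* Assume the Elliott–Halberstam Conjecture, fix $\delta>0$ and a constant $C\ge 3$. Then $g_n-g_n(n^{1+\delta}) = o(1/n)$ for all but $\ll x/\log^C x$ natural numbers $n\le x$; that is, for every $\epsilon>0$, the number of natural numbers $n\le x$ with $|g_n-g_n(n^{1+\delta})|>\epsilon/n$ is $\ll x/\log^C x$.
   Context: Elliott–Halberstam Conjecture: for any $\delta'>0$ and any $A>0$, $$\sum_{k<x^{1-\delta'}} \max_{(l,k)=1}\max_{y\le x}\left|\pi(y,k,l)-\frac{\operatorname{li} y}{\phi(k)}\right| \ll_{\delta',A} \frac{x}{\log^A x},$$ where $\pi(y,k,l)$ is the number of primes $p\le y$ with $p\equiv l \pmod k$ and $\operatorname{li} y=\int_2^y dt/\log t$. For a natural number $n$ and real $x$, $g_n(x) = \sum_{q\le x,\ q\text{ prime},\ q\equiv 1 (n)} 1/q - \sum_{q\le x,\ q\text{ prime},\ q\equiv -1 (n)} 1/q$, and $g_n=\lim_{x\to\infty}g_n(x)$. *)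

From Stdlib Require Import Bool Reals ZArith Znumtheory List Arith Lia.
From Coquelicot Require Import Coquelicot.
Open Scope R_scope.

Definition primeb (p : nat) : bool :=
  if prime_dec (Z.of_nat p) then true else false.

Definition nats_le (y : R) : list nat :=
  filter (fun m => if Rle_dec (INR m) y then true else false)
         (seq 0 (Z.to_nat (up y))).

Definition sumR (l : list nat) (f : nat -> R) : R :=
  fold_right (fun m acc => f m + acc) 0 l.

(* congruence a = b (mod k) for naturals, k >= 0 (k = 0: equality) *)
Definition congb (a b k : nat) : bool := Nat.eqb (a mod k) (b mod k).

Definition pi_ap (y : R) (k l : nat) : nat :=
  length (filter (fun p => primeb p && congb p l k) (nats_le y)).

Definition li (y : R) : R := RInt (fun t => / ln t) 2 y.

Definition phi (k : nat) : nat :=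
  length (filter (fun a => Nat.eqb (Nat.gcd a k) 1) (seq 1 k)).

(* The maxima over l (coprime to k) and
   over y (2 <= y <= x) are expressed by quantifying over all choice
   functions k |-> l k, k |-> y k: the sum of the maxima is bounded by B
   iff every such choice yields a sum bounded by B. *)
Definition EH : Prop :=
  forall delta' A : R, 0 < delta' -> 0 < A ->
  exists K x0 : R, forall x : R, x0 <= x ->
  forall (lsel : nat -> nat) (ysel : nat -> R),
    (forall k, Nat.gcd (lsel k) k = 1%nat) ->
    (forall k, 2 <= ysel k <= x) ->
    sumR (filter (fun k => if Rlt_dec (INR k) (Rpower x (1 - delta')) then true else false)
                 (seq 1 (Z.to_nat (up (Rpower x (1 - delta'))))))
         (fun k => Rabs (INR (pi_ap (ysel k) k (lsel k)) - li (ysel k) / INR (phi k)))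
    <= K * x / Rpower (ln x) A.

Definition gx (n : nat) (x : R) : R :=
  sumR (filter (fun q => primeb q && congb q 1 n) (nats_le x)) (fun q => / INR q)
  - sumR (filter (fun q => primeb q && congb (S q) 0 n) (nats_le x)) (fun q => / INR q).

(* g_n = lim_{x -> oo} g_n(x) (g_n(x) is a step function with jumps at
   integers, so the limit along integers is the limit as x -> oo) *)
Definition g (n : nat) : R := real (Lim_seq (fun m => gx n (INR m))).

Definition exceptional_count (delta eps x : R) : nat :=
  length (filter (fun n =>
     Nat.ltb 0 n &&
     (if Rlt_dec (eps / INR n) (Rabs (g n - gx n (Rpower (INR n) (1 + delta))))
      then true else false))
   (nats_le x)).

From Stdlib Require Import Bool Reals Lra Lia List ZArith ClassicalEpsilon Classical.
From Coquelicot Require Import Coquelicot.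
Open Scope R_scope.

(* Write [D_n(m) = pi(m;n,1) - pi(m;n,-1)]. By partial summation [g_n - g_n(T)] is a weighted
   sum of [D_n(m)], [m >= T]; if [|D_n(m)| <= (eps / 4n) m / ln^2 (m+1)] for all [m >= T = n^(1+delta)]
   then [|g_n - g_n(T)| <= 3 eps / 4n]. So every exceptional [n] has a witness [m >= n^(1+delta)]
   where [D_n(m)] is large. Sort the exceptional [n > sqrt x] by the dyadic block [[2^j, 2^(j+1))]
   of their witness: with [X = 2^(j+1)] each such [n] is below [X^(1/(1+delta))] and contributes
   at least [eps X / (8 x ln^2 X)] to the Elliott-Halberstam sum at level [X] (with [A = C + 4]),
   so block [j] has [<< x / ln^(C+2) X << x / (ln^C x (j+1)^2)] members. Summing over [j] and
   adding the [n <= sqrt x] gives [<< x / ln^C x]. *)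

(** * Finite sums over lists *)

Definition ind (b : bool) : R := if b then 1 else 0.

Lemma sumR_app l1 l2 f : sumR (l1 ++ l2) f = sumR l1 f + sumR l2 f.
Proof. induction l1 as [|a l IH]; simpl; [|rewrite IH]; ring. Qed.

Lemma sumR_plus l f h : sumR l (fun n => f n + h n) = sumR l f + sumR l h.
Proof. induction l as [|a l IH]; simpl; [|rewrite IH]; ring. Qed.

Lemma sumR_scal l f c : sumR l (fun n => c * f n) = c * sumR l f.
Proof. induction l as [|a l IH]; simpl; [|rewrite IH]; ring. Qed.

Lemma sumR_le l f h : (forall n, In n l -> f n <= h n) -> sumR l f <= sumR l h.
Proof.
  induction l as [|a l IH]; simpl; intros H; [lra|].
  pose proof (H a (or_introl eq_refl)).
  pose proof (IH (fun n Hn => H n (or_intror Hn))). lra.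
Qed.

Lemma sumR_nonneg l f : (forall n, 0 <= f n) -> 0 <= sumR l f.
Proof. intros H; induction l as [|a l IH]; simpl; [lra|]. pose proof (H a); lra. Qed.

Lemma sumR_ext l f h : (forall n, In n l -> f n = h n) -> sumR l f = sumR l h.
Proof. induction l as [|a l IH]; simpl; intros H; [|rewrite H, IH by auto]; ring. Qed.

Lemma sumR_zero l f : (forall n, In n l -> f n = 0) -> sumR l f = 0.
Proof. induction l as [|a l IH]; simpl; intros H; [|rewrite H, IH by auto]; ring. Qed.

Lemma sumR_filter l P f :
  sumR (filter P l) f = sumR l (fun n => if P n then f n else 0).
Proof. induction l as [|a l IH]; simpl; [|destruct (P a); simpl; rewrite IH]; ring. Qed.

Lemma INR_length_filter l P : INR (length (filter P l)) = sumR l (fun n => ind (P n)).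
Proof.
  induction l as [|a l IH]; [reflexivity|]. simpl. unfold ind at 1.
  destruct (P a); simpl length; rewrite ?S_INR, IH; ring.
Qed.

Lemma sumR_swap l1 l2 (F : nat -> nat -> R) :
  sumR l1 (fun n => sumR l2 (F n)) = sumR l2 (fun j => sumR l1 (fun n => F n j)).
Proof.
  induction l1 as [|a l IH]; simpl.
  - symmetry; apply sumR_zero; auto.
  - rewrite IH, <- sumR_plus. reflexivity.
Qed.

Lemma sumR_seq_S s L f : sumR (seq s (S L)) f = sumR (seq s L) f + f (s + L)%nat.
Proof. rewrite seq_S, sumR_app. simpl. ring. Qed.

Lemma sumR_telescope (c : nat -> R) L :
  sumR (seq 0 L) (fun j => c j - c (S j)) = c O - c L.
Proof. induction L as [|L IH]; [simpl; ring|]. rewrite sumR_seq_S, IH. simpl; ring. Qed.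

Lemma sumR_le_incl l1 l2 f : (forall n, 0 <= f n) -> NoDup l1 -> incl l1 l2 ->
  sumR l1 f <= sumR l2 f.
Proof.
  intros Hf. revert l2. induction l1 as [|a l1 IH]; intros l2 Hnd Hincl.
  - apply sumR_nonneg, Hf.
  - inversion Hnd as [|? ? Ha Hnd']; subst.
    destruct (in_split a l2 (Hincl a (or_introl eq_refl))) as [u [v ->]].
    assert (Hl1 : incl l1 (u ++ v)).
    { intros b Hb. destruct (in_app_or _ _ _ (Hincl b (or_intror Hb))) as [Hu|[<-|Hv]];
        [apply in_or_app; auto|contradiction|apply in_or_app; auto]. }
    pose proof (IH (u ++ v) Hnd' Hl1). rewrite sumR_app in *. simpl. lra.
Qed.

Lemma sumR_ind_delta L v : (v < L)%nat ->
  sumR (seq 0 L) (fun j => ind (Nat.eqb v j)) = 1.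
Proof.
  intros H. replace L with (v + (1 + (L - v - 1)))%nat by lia.
  rewrite !seq_app, !sumR_app. simpl. rewrite Nat.eqb_refl, !sumR_zero; [simpl; ring| |];
    intros n Hn; apply in_seq in Hn; unfold ind; destruct (Nat.eqb_spec v n); lia || reflexivity.
Qed.

Lemma sumR_ind_by_label l P (lab : nat -> nat) J :
  (forall n, In n l -> P n = true -> (lab n < J)%nat) ->
  sumR l (fun n => ind (P n)) =
  sumR (seq 0 J) (fun j => sumR l (fun n => ind (P n && Nat.eqb (lab n) j))).
Proof.
  intros Hlab. rewrite <- sumR_swap. apply sumR_ext. intros n Hn.
  destruct (P n) eqn:HP; simpl.
  - symmetry. apply sumR_ind_delta, Hlab; auto.
  - symmetry. apply sumR_zero. reflexivity.
Qed.

Lemma up_nat_bounds y : 0 <= y ->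
  (1 <= Z.to_nat (up y))%nat /\ y < INR (Z.to_nat (up y)) <= y + 1.
Proof.
  intros Hy. destruct (archimed y) as [H1 H2].
  assert (Hz : (0 < up y)%Z) by (apply lt_IZR; lra).
  rewrite INR_IZR_INZ, Z2Nat.id by lia. split; [lia|lra].
Qed.

Lemma nats_le_seq y : 0 <= y -> nats_le y = seq 0 (Z.to_nat (up y)).
Proof.
  intros Hy. destruct (up_nat_bounds y Hy) as [H1 [H2 H3]]. unfold nats_le.
  rewrite <- (List.filter_true (seq 0 _)) at 2. apply filter_ext_in. intros k Hk.
  apply in_seq in Hk. destruct (Rle_dec (INR k) y) as [|Hky]; [reflexivity|].
  exfalso. apply Hky.
  assert (HkS : (S k <= Z.to_nat (up y))%nat) by lia. apply le_INR in HkS.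
  rewrite S_INR in HkS. lra.
Qed.

Lemma nats_le_INR m : nats_le (INR m) = seq 0 (S m).
Proof.
  rewrite nats_le_seq by apply pos_INR. f_equal.
  destruct (up_nat_bounds (INR m) (pos_INR m)) as [_ [H1 H2]].
  apply INR_lt in H1. assert (Z.to_nat (up (INR m)) < S (S m))%nat
    by (apply INR_lt; rewrite !S_INR; lra). lia.
Qed.

Lemma in_nats_le n y : In n (nats_le y) -> INR n <= y.
Proof.
  unfold nats_le. intros H. apply filter_In in H as [_ H].
  destruct (Rle_dec (INR n) y); [assumption|discriminate].
Qed.

Definition nat_floor (y : R) : nat := pred (Z.to_nat (up y)).

Lemma nat_floor_spec y : 0 <= y ->
  INR (nat_floor y) <= y < INR (nat_floor y) + 1 /\ nats_le y = nats_le (INR (nat_floor y)).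
Proof.
  intros Hy. destruct (up_nat_bounds y Hy) as [H1 [H2 H3]]. unfold nat_floor.
  rewrite nats_le_INR, (nats_le_seq y Hy), Nat.succ_pred by lia.
  rewrite <- (Nat.succ_pred (Z.to_nat (up y))), S_INR in H2, H3 by lia. split; [lra|reflexivity].
Qed.

Lemma sumR_ind_le_bound N s : 0 <= s ->
  sumR (seq 0 N) (fun n => ind (if Rle_dec (INR n) s then true else false)) <= s + 1.
Proof.
  intros Hs.
  enough (H : sumR (seq 0 N) (fun n => ind (if Rle_dec (INR n) s then true else false))
                <= Rmin (INR N) (s + 1)) by (pose proof (Rmin_r (INR N) (s + 1)); lra).
  induction N as [|N IH]; [simpl; apply Rmin_glb; lra|].
  rewrite sumR_seq_S, S_INR. simpl Nat.add. unfold ind at 2.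
  pose proof (Rmin_l (INR N) (s + 1)). pose proof (Rmin_r (INR N) (s + 1)).
  destruct (Rle_dec (INR N) s); apply Rmin_glb; lra.
Qed.

(** * The discrepancy between the residues 1 and -1 *)

(* [k - 1] is the residue class of [-1] modulo [k]. *)
Definition pi_diff (y : R) (k : nat) : R :=
  INR (pi_ap y k 1) - INR (pi_ap y k (k - 1)).

Lemma congb_pred n p : (1 <= n)%nat -> congb p (n - 1) n = congb (S p) 0 n.
Proof.
  intros Hn. unfold congb. rewrite Nat.Div0.mod_0_l, (Nat.mod_small (n - 1)) by lia.
  pose proof (Nat.mod_upper_bound p n ltac:(lia)).
  pose proof (Nat.div_mod p n ltac:(lia)).
  destruct (Nat.eqb_spec (p mod n) (n - 1)) as [e1|e1];
    destruct (Nat.eqb_spec (S p mod n) 0) as [e|e]; auto; exfalso.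
  - apply e, Nat.Div0.mod_divides. exists (S (p / n)). lia.
  - apply e1. apply Nat.Div0.mod_divides in e as [[|c] Hc]; [lia|].
    symmetry. apply (Nat.mod_unique p n c); lia.
Qed.

Lemma pi_diff_step n m : (1 <= n)%nat ->
  pi_diff (INR (S m)) n - pi_diff (INR m) n =
  ind (primeb (S m) && congb (S m) 1 n) - ind (primeb (S m) && congb (S (S m)) 0 n).
Proof.
  intros Hn. unfold pi_diff, pi_ap. rewrite !nats_le_INR, (seq_S (S m)), !filter_app.
  rewrite !length_app, !plus_INR. simpl. rewrite congb_pred by exact Hn.
  unfold ind. destruct (primeb (S m) && congb (S m) 1 n), (primeb (S m) && congb (S (S m)) 0 n);
    simpl; ring.
Qed.

Lemma gx_step n m : (1 <= n)%nat ->
  gx n (INR (S m)) - gx n (INR m) = (pi_diff (INR (S m)) n - pi_diff (INR m) n) / INR (S m).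
Proof.
  intros Hn. rewrite pi_diff_step by exact Hn. unfold gx. rewrite !nats_le_INR, !sumR_filter.
  rewrite (sumR_seq_S 0 (S m)), (sumR_seq_S 0 (S m)). simpl Nat.add.
  assert (INR (S m) <> 0) by (apply not_0_INR; lia).
  unfold ind. destruct (primeb (S m) && congb (S m) 1 n), (primeb (S m) && congb (S (S m)) 0 n);
    field; assumption.
Qed.

(** * Partial summation *)

Lemma ln_ge_1 y : 3 <= y -> 1 <= ln y.
Proof.
  intros Hy. rewrite <- (ln_exp 1). apply ln_le; [apply exp_pos|].
  pose proof exp_le_3. lra.
Qed.

Lemma Rinv_pos_le_1 x : 1 <= x -> 0 < / x <= 1.
Proof.
  intros Hx. split; [apply Rinv_0_lt_compat; lra|].
  rewrite <- Rinv_1. apply Rinv_le_contravar; lra.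
Qed.

Lemma inv_succ_le_ln_sub M : 0 < M -> / (M + 1) <= ln (M + 1) - ln M.
Proof.
  intros HM. assert (Hq : 0 < M / (M + 1)) by (apply Rdiv_lt_0_compat; lra).
  pose proof (exp_ineq1_le (ln (M / (M + 1)))) as H.
  rewrite exp_ln, ln_div in H by lra.
  replace (M / (M + 1)) with (1 - / (M + 1)) in H by (field; lra). lra.
Qed.

Lemma inv_mul_ln_sqr_le M : 2 <= M ->
  / ((M + 1) * ln (M + 1) ^ 2) <= / ln M - / ln (M + 1).
Proof.
  intros HM.
  assert (h1 : 0 < ln M) by (rewrite <- ln_1; apply ln_increasing; lra).
  assert (h2 : ln M <= ln (M + 1)) by (apply ln_le; lra).
  pose proof (inv_succ_le_ln_sub M ltac:(lra)) as h3.
  replace (/ ln M - / ln (M + 1)) with ((ln (M + 1) - ln M) / (ln M * ln (M + 1)))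
    by (field; lra).
  apply Rle_trans with (/ (M + 1) / (ln M * ln (M + 1))).
  - unfold Rdiv. rewrite <- Rinv_mult. apply Rinv_le_contravar.
    { apply Rmult_lt_0_compat; [lra|]. apply Rmult_lt_0_compat; lra. }
    replace (ln (M + 1) ^ 2) with (ln (M + 1) * ln (M + 1)) by ring.
    apply Rmult_le_compat_l; [lra|]. apply Rmult_le_compat_r; lra.
  - unfold Rdiv. apply Rmult_le_compat_r; [|lra].
    left; apply Rinv_0_lt_compat, Rmult_lt_0_compat; lra.
Qed.

Section PartialSummation.

Variables (G D : nat -> R) (eta : R) (a : nat).

Hypothesis G_step : forall m, G (S m) - G m = (D (S m) - D m) / INR (S m).
Hypothesis a_ge_2 : (2 <= a)%nat.
Hypothesis D_bound :
  forall m, (a <= m)%nat -> Rabs (D m) <= eta * INR m / ln (INR m + 1) ^ 2.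

Let INR_ge_2 m : (a <= m)%nat -> 2 <= INR m.
Proof. intros Hm. replace 2 with (INR 2) by reflexivity. apply le_INR. lia. Qed.

Let eta_nonneg : 0 <= eta.
Proof.
  pose proof (INR_ge_2 a (le_n a)). pose proof (D_bound a (le_n a)) as HD.
  pose proof (ln_ge_1 (INR a + 1) ltac:(lra)).
  assert (0 < INR a / ln (INR a + 1) ^ 2) by (apply Rdiv_lt_0_compat; nra).
  pose proof (Rabs_pos (D a)). unfold Rdiv in *. nra.
Qed.

Lemma D_div_succ_bound m : (a <= m)%nat -> Rabs (D m / (INR m + 1)) <= eta.
Proof.
  intros Hm. pose proof (INR_ge_2 m Hm). pose proof (D_bound m Hm) as HD.
  pose proof (ln_ge_1 (INR m + 1) ltac:(lra)) as Hl.
  pose proof eta_nonneg.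
  rewrite Rabs_div, (Rabs_right (INR m + 1)) by lra.
  apply Rle_trans with (eta * INR m / ln (INR m + 1) ^ 2 / (INR m + 1)).
  - unfold Rdiv at 1 3. apply Rmult_le_compat_r; [left; apply Rinv_0_lt_compat|]; lra.
  - replace (eta * INR m / ln (INR m + 1) ^ 2 / (INR m + 1))
      with (eta * (INR m / (INR m + 1)) * / ln (INR m + 1) ^ 2) by (field; nra).
    assert (INR m / (INR m + 1) <= 1) by (apply (Rdiv_le_1 (INR m) (INR m + 1)); lra).
    assert (0 < / ln (INR m + 1) ^ 2 <= 1).
    { apply Rinv_pos_le_1, pow_R1_Rle, Hl. }
    assert (0 <= INR m / (INR m + 1)) by (apply Rdiv_le_0_compat; lra).
    rewrite Rmult_assoc. assert (INR m / (INR m + 1) * / ln (INR m + 1) ^ 2 <= 1) by nra. nra.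
Qed.

Lemma abel_remainder_bound k :
  Rabs (G (a + k) - G a - (D (a + k) / (INR (a + k) + 1) - D a / (INR a + 1)))
  <= eta * (/ ln (INR a + 1) - / ln (INR (a + k) + 1)).
Proof.
  induction k as [|k IH].
  - rewrite Nat.add_0_r.
    replace (G a - G a - (D a / (INR a + 1) - D a / (INR a + 1))) with 0 by ring.
    rewrite Rabs_R0. lra.
  - replace (a + S k)%nat with (S (a + k)) by lia.
    pose proof (G_step (a + k)) as Hs. pose proof (D_bound (S (a + k)) ltac:(lia)) as HD.
    pose proof (INR_ge_2 (a + k) ltac:(lia)) as Hr.
    rewrite !S_INR in *. set (r := INR (a + k)) in *.
    pose proof (ln_ge_1 (r + 1 + 1) ltac:(lra)).
    assert (Hsplit : G (S (a + k)) - G a - (D (S (a + k)) / (r + 1 + 1) - D a / (INR a + 1))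
      = G (a + k) - G a - (D (a + k) / (r + 1) - D a / (INR a + 1))
        + D (S (a + k)) / ((r + 1) * (r + 1 + 1))).
    { replace (G (S (a + k))) with (G (a + k) + (D (S (a + k)) - D (a + k)) / (r + 1)) by lra.
      pose proof (pos_INR a). field. repeat split; lra. }
    assert (Hterm : Rabs (D (S (a + k)) / ((r + 1) * (r + 1 + 1)))
                    <= eta * (/ ln (r + 1) - / ln (r + 1 + 1))).
    { rewrite Rabs_div, (Rabs_right ((r + 1) * (r + 1 + 1))) by nra.
      apply Rle_trans with (eta * / ((r + 1 + 1) * ln (r + 1 + 1) ^ 2)).
      - replace (eta * / ((r + 1 + 1) * ln (r + 1 + 1) ^ 2))
          with (eta * (r + 1) / ln (r + 1 + 1) ^ 2 / ((r + 1) * (r + 1 + 1))) by (field; nra).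
        unfold Rdiv at 1 3. apply Rmult_le_compat_r; [left; apply Rinv_0_lt_compat; nra|exact HD].
      - apply Rmult_le_compat_l; [exact eta_nonneg|]. apply inv_mul_ln_sqr_le. lra. }
    rewrite Hsplit. eapply Rle_trans; [apply Rabs_triang|]. lra.
Qed.

Lemma partial_summation_tail_bound k : Rabs (G (a + k) - G a) <= 3 * eta.
Proof.
  pose proof (abel_remainder_bound k) as HR.
  pose proof (D_div_succ_bound (a + k) ltac:(lia)) as Hk.
  pose proof (D_div_succ_bound a (le_n a)) as Ha.
  pose proof (INR_ge_2 a (le_n a)). pose proof (INR_ge_2 (a + k) ltac:(lia)).
  pose proof (Rinv_pos_le_1 _ (ln_ge_1 (INR a + 1) ltac:(lra))).
  pose proof (Rinv_pos_le_1 _ (ln_ge_1 (INR (a + k) + 1) ltac:(lra))).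
  set (q := D (a + k) / (INR (a + k) + 1) - D a / (INR a + 1)) in HR.
  replace (G (a + k) - G a) with ((G (a + k) - G a - q) + q) by ring.
  eapply Rle_trans; [apply Rabs_triang|].
  assert (Hq : Rabs q <= 2 * eta).
  { unfold q, Rminus. eapply Rle_trans; [apply Rabs_triang|]. rewrite Rabs_Ropp. lra. }
  assert (eta * (/ ln (INR a + 1) - / ln (INR (a + k) + 1)) <= eta)
    by (pose proof eta_nonneg; nra).
  lra.
Qed.

End PartialSummation.

(* No convergence is needed: [Lim_seq] is monotone for any sequence. *)
Lemma Lim_seq_dist_le (G : nat -> R) a B :
  (forall n, (a <= n)%nat -> Rabs (G n - G a) <= B) -> Rabs (real (Lim_seq G) - G a) <= B.
Proof.
  intros H.
  assert (L1 : Rbar_le (Lim_seq G) (Lim_seq (fun _ => G a + B))).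
  { apply Lim_seq_le_loc. exists a. intros n Hn. apply H, Rabs_le_between' in Hn. lra. }
  assert (L2 : Rbar_le (Lim_seq (fun _ => G a - B)) (Lim_seq G)).
  { apply Lim_seq_le_loc. exists a. intros n Hn. apply H, Rabs_le_between' in Hn. lra. }
  rewrite Lim_seq_const in L1, L2.
  destruct (Lim_seq G); simpl in *; try contradiction.
  apply Rabs_le_between'. lra.
Qed.

(** * Exceptional moduli and dyadic blocks *)

Definition exceptional (delta eps : R) (n : nat) : bool :=
  Nat.ltb 0 n &&
  (if Rlt_dec (eps / INR n) (Rabs (g n - gx n (Rpower (INR n) (1 + delta)))) then true else false).

Definition witness_at (delta eps : R) (n m : nat) : Prop :=
  Rpower (INR n) (1 + delta) < INR m + 1 /\
  eps / (4 * INR n) * INR m / ln (INR m + 1) ^ 2 < Rabs (pi_diff (INR m) n).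

Lemma Rpower_ge_base x e : 1 <= x -> 1 <= e -> x <= Rpower x e.
Proof. intros Hx He. rewrite <- (Rpower_1 x) at 1 by lra. apply Rle_Rpower; lra. Qed.

Lemma exceptional_witness delta eps n : 0 < delta -> 0 < eps -> (2 <= n)%nat ->
  exceptional delta eps n = true -> exists m, witness_at delta eps n m.
Proof.
  intros Hd He Hn Hexc. apply NNPP. intros Hno.
  unfold exceptional in Hexc. apply andb_prop in Hexc as [_ Hexc].
  destruct (Rlt_dec _ _) as [Hlt|]; [clear Hexc|discriminate].
  set (T := Rpower (INR n) (1 + delta)) in *.
  assert (Hn2 : 2 <= INR n) by (replace 2 with (INR 2) by reflexivity; apply le_INR; lia).
  assert (HT : INR n <= T) by (apply Rpower_ge_base; lra).
  destruct (nat_floor_spec T ltac:(lra)) as [[Ha1 Ha2] Hnl].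
  set (a := nat_floor T) in *.
  assert (Ha : (2 <= a)%nat) by (apply INR_lt; simpl; lra).
  set (eta := eps / (4 * INR n)).
  assert (Htail : forall m, (a <= m)%nat -> Rabs (gx n (INR m) - gx n (INR a)) <= 3 * eta).
  { intros m Hm. replace m with (a + (m - a))%nat by lia.
    apply (partial_summation_tail_bound (fun m => gx n (INR m)) (fun m => pi_diff (INR m) n)).
    - intros k. apply gx_step. lia.
    - exact Ha.
    - intros k Hk. apply Rnot_lt_le. intros Hgt. apply Hno. exists k. split; [|exact Hgt].
      apply le_INR in Hk. change (T < INR k + 1). lra. }
  pose proof (Lim_seq_dist_le (fun m => gx n (INR m)) a _ Htail) as Hlim.
  assert (Hgx : gx n T = gx n (INR a)) by (unfold gx; rewrite Hnl; reflexivity).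
  unfold g in Hlt. rewrite Hgx in Hlt.
  assert (3 * eta < eps / INR n).
  { unfold eta, Rdiv. rewrite Rinv_mult. assert (0 < / INR n) by (apply Rinv_0_lt_compat; lra).
    nra. }
  lra.
Qed.

(* Junk value [0] when there is no witness; only used for exceptional [n]. *)
Definition witness (delta eps : R) (n : nat) : nat :=
  epsilon (inhabits 0%nat) (witness_at delta eps n).

Definition above_sqrt (x : R) (n : nat) : bool :=
  if Rlt_dec (sqrt x) (INR n) then true else false.

Definition in_block (delta eps x : R) (j n : nat) : bool :=
  above_sqrt x n && exceptional delta eps n && Nat.eqb (Nat.log2 (witness delta eps n)) j.

Lemma sqrt_ge_2 x : 4 <= x -> 2 <= sqrt x.
Proof. intros Hx. rewrite <- (sqrt_square 2) by lra. apply sqrt_le_1_alt. unfold Rsqr; lra. Qed.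

Lemma witness_spec delta eps x n : 0 < delta -> 0 < eps -> 4 <= x ->
  above_sqrt x n = true -> exceptional delta eps n = true ->
  (2 <= n)%nat /\ sqrt x < INR n /\ witness_at delta eps n (witness delta eps n) /\
  (2 <= witness delta eps n)%nat.
Proof.
  intros Hd He Hx Hbig Hexc. unfold above_sqrt in Hbig.
  destruct (Rlt_dec (sqrt x) (INR n)) as [Hs|]; [clear Hbig|discriminate].
  pose proof (sqrt_ge_2 x Hx).
  assert (Hn : (2 <= n)%nat) by (apply INR_lt; simpl; lra).
  pose proof (epsilon_spec (inhabits 0%nat) (witness_at delta eps n)
                (exceptional_witness delta eps n Hd He Hn Hexc)) as Hw.
  fold (witness delta eps n) in Hw.
  split; [assumption|split; [assumption|split; [assumption|]]].
  destruct Hw as [HT _].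
  assert (INR n <= Rpower (INR n) (1 + delta)) by (apply Rpower_ge_base; lra).
  apply INR_lt. simpl. lra.
Qed.

Lemma in_block_spec delta eps x j n : 0 < delta -> 0 < eps -> 4 <= x ->
  in_block delta eps x j n = true ->
  (2 <= n)%nat /\ sqrt x < INR n /\ witness_at delta eps n (witness delta eps n) /\
  2 <= INR (witness delta eps n) /\ 2 ^ S j / 2 <= INR (witness delta eps n) /\
  INR (witness delta eps n) + 1 <= 2 ^ S j.
Proof.
  intros Hd He Hx Hb. unfold in_block in Hb.
  apply andb_prop in Hb as [Hb Hj]. apply andb_prop in Hb as [Hbig Hexc].
  destruct (witness_spec delta eps x n Hd He Hx Hbig Hexc) as [Hn [Hs [Hw HW]]].
  apply Nat.eqb_eq in Hj. pose proof (Nat.log2_spec (witness delta eps n) ltac:(lia)) as Hl.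
  rewrite Hj in Hl. destruct Hl as [Hl1 Hl2].
  apply le_INR in HW, Hl1, Hl2. assert (Two : INR 2 = 2) by (simpl; lra).
  rewrite !pow_INR, Two in *. rewrite S_INR in Hl2. simpl pow in *.
  split; [assumption|split; [assumption|split; [assumption|]]].
  repeat split; lra.
Qed.

(** * Counting with the Elliott-Halberstam conjecture *)

Definition EH_range (X c : R) : list nat :=
  filter (fun k => if Rlt_dec (INR k) (Rpower X c) then true else false)
         (seq 1 (Z.to_nat (up (Rpower X c)))).

Lemma In_EH_range k X c : In k (EH_range X c) <-> (1 <= k)%nat /\ INR k < Rpower X c.
Proof.
  unfold EH_range. rewrite filter_In, in_seq.
  destruct (up_nat_bounds (Rpower X c) (Rlt_le _ _ (exp_pos _))) as [_ [Hup _]].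
  destruct (Rlt_dec (INR k) (Rpower X c)) as [Hk|Hk]; split; intros H; try tauto.
  - destruct H as [H1 H2]. split; [split; [lia|]|reflexivity].
    apply INR_lt. rewrite plus_INR. simpl. lra.
  - destruct H as [_ H]. discriminate.
Qed.

Definition EH_discrepancy (c A K x0 : R) : Prop :=
  forall X, x0 <= X -> forall y : nat -> R, (forall k, 2 <= y k <= X) ->
  sumR (EH_range X c) (fun k => Rabs (pi_diff (y k) k)) <= K * X / Rpower (ln X) A.

Lemma gcd_1_l k : Nat.gcd 1 k = 1%nat.
Proof. apply Nat.divide_1_r, Nat.gcd_divide_l. Qed.

Lemma gcd_pred_l k : Nat.gcd (match k with O => 1 | S k' => k' end) k = 1%nat.
Proof.
  destruct k as [|k]; [reflexivity|]. change (S k) with (1 + k)%nat.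
  rewrite Nat.gcd_add_diag_r, Nat.gcd_comm. apply gcd_1_l.
Qed.

(* EH applied to the residues [1] and [-1]; the main terms [li y / phi k] cancel. *)
Lemma EH_discrepancy_bound c A : EH -> 0 < c < 1 -> 0 < A ->
  exists K x0, 0 <= K /\ EH_discrepancy c A K x0.
Proof.
  intros HEH Hc HA. destruct (HEH (1 - c) A ltac:(lra) HA) as [K [x0 HK]].
  exists (2 * Rmax K 0), x0. split; [pose proof (Rmax_r K 0); lra|].
  intros X HX y Hy.
  set (lpred := fun k : nat => match k with O => 1%nat | S k' => k' end).
  pose proof (HK X HX (fun _ => 1%nat) y gcd_1_l Hy) as H1.
  pose proof (HK X HX lpred y gcd_pred_l Hy) as H2.
  replace (1 - (1 - c)) with c in H1, H2 by ring.
  change (filter _ _) with (EH_range X c) in H1, H2.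
  set (err := fun l k => Rabs (INR (pi_ap (y k) k l) - li (y k) / INR (phi k))).
  apply Rle_trans with (sumR (EH_range X c) (fun k => err 1%nat k + err (lpred k) k)).
  - apply sumR_le. intros k Hk. apply In_EH_range in Hk as [Hk _].
    replace (lpred k) with (k - 1)%nat by (unfold lpred; destruct k; lia).
    unfold err, pi_diff.
    set (L := li (y k) / INR (phi k)).
    replace (INR (pi_ap (y k) k 1) - INR (pi_ap (y k) k (k - 1)))
      with ((INR (pi_ap (y k) k 1) - L) + - (INR (pi_ap (y k) k (k - 1)) - L)) by ring.
    eapply Rle_trans; [apply Rabs_triang|]. rewrite Rabs_Ropp. lra.
  - rewrite sumR_plus. pose proof (Hy O). pose proof (Rmax_l K 0).
    assert (0 <= X / Rpower (ln X) A) by (apply Rdiv_le_0_compat; [lra|apply exp_pos]).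
    unfold err. unfold Rdiv in *. nra.
Qed.

Lemma lt_Rpower_inv n d X : 0 < n -> 0 < d -> Rpower n (1 + d) < X -> n < Rpower X (/ (1 + d)).
Proof.
  intros Hn Hd HX. rewrite <- (Rpower_1 n) at 1 by exact Hn.
  replace 1 with ((1 + d) * / (1 + d)) at 1 by (field; lra).
  rewrite <- Rpower_mult. apply Rlt_Rpower_l; [apply Rinv_0_lt_compat; lra|].
  split; [apply exp_pos|exact HX].
Qed.

Lemma block_threshold_le eps x n m X : 0 < eps -> 1 <= n <= x -> 2 <= m ->
  X / 2 <= m -> m + 1 <= X ->
  eps * X / (8 * x * ln X ^ 2) <= eps / (4 * n) * m / ln (m + 1) ^ 2.
Proof.
  intros He Hn Hm H1 H2.
  assert (l1 : 1 <= ln (m + 1)) by (apply ln_ge_1; lra).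
  assert (l2 : ln (m + 1) <= ln X) by (apply ln_le; lra).
  assert (a1 : eps / (4 * x) <= eps / (4 * n)).
  { unfold Rdiv. apply Rmult_le_compat_l; [lra|]. apply Rinv_le_contravar; lra. }
  assert (a2 : / ln X ^ 2 <= / ln (m + 1) ^ 2) by (apply Rinv_le_contravar; nra).
  assert (0 <= eps / (4 * x)) by (apply Rdiv_le_0_compat; lra).
  assert (0 < / ln X ^ 2) by (apply Rinv_0_lt_compat; nra).
  replace (eps * X / (8 * x * ln X ^ 2)) with (eps / (4 * x) * (X / 2) * / ln X ^ 2)
    by (field; split; nra).
  unfold Rdiv at 3. apply Rmult_le_compat; [nra|lra| |exact a2].
  apply Rmult_le_compat; lra.
Qed.

(* For [k] in block [j], the level at which the EH sum is evaluated is the witness of [k]. *)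
Definition block_level (delta eps x : R) (j k : nat) : R :=
  if in_block delta eps x j k then INR (witness delta eps k) else 2.

Lemma block_level_bounds delta eps x j k : 0 < delta -> 0 < eps -> 4 <= x ->
  2 <= block_level delta eps x j k <= 2 ^ S j.
Proof.
  intros Hd He Hx. unfold block_level.
  destruct (in_block delta eps x j k) eqn:Hk; [|pose proof (pow_R1_Rle 2 j ltac:(lra)); simpl; lra].
  destruct (in_block_spec delta eps x j k Hd He Hx Hk) as [_ [_ [_ [HW [_ HW2]]]]]. lra.
Qed.

Lemma block_count_threshold_le delta eps x j : 0 < delta -> 0 < eps -> 4 <= x ->
  eps * 2 ^ S j / (8 * x * ln (2 ^ S j) ^ 2)
    * sumR (nats_le x) (fun n => ind (in_block delta eps x j n))
  <= sumR (EH_range (2 ^ S j) (/ (1 + delta)))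
       (fun k => Rabs (pi_diff (block_level delta eps x j k) k)).
Proof.
  intros Hd He Hx. rewrite <- sumR_scal.
  apply Rle_trans with (sumR (filter (in_block delta eps x j) (nats_le x))
                          (fun k => Rabs (pi_diff (block_level delta eps x j k) k))).
  - rewrite sumR_filter. apply sumR_le. intros n Hn. unfold ind, block_level.
    destruct (in_block delta eps x j n) eqn:Hq; [|lra].
    destruct (in_block_spec delta eps x j n Hd He Hx Hq) as [Hn2 [_ [[_ Hw] [HW [HW1 HW2]]]]].
    apply in_nats_le in Hn.
    assert (1 <= INR n) by (replace 1 with (INR 1) by reflexivity; apply le_INR; lia).
    pose proof (block_threshold_le eps x (INR n) _ _ He ltac:(lra) HW HW1 HW2). lra.
  - apply sumR_le_incl; [intros; apply Rabs_pos| |].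
    + apply NoDup_filter. rewrite nats_le_seq by lra. apply seq_NoDup.
    + intros n Hn. apply filter_In in Hn as [_ Hq].
      destruct (in_block_spec delta eps x j n Hd He Hx Hq) as [Hn2 [_ [[HT _] [_ [_ HW2]]]]].
      apply In_EH_range. split; [lia|].
      apply lt_Rpower_inv; [apply lt_0_INR; lia|exact Hd|lra].
Qed.

Lemma block_count_le delta eps C K x0 x j :
  0 < delta -> 0 < eps -> 4 <= x -> x0 <= sqrt x -> sqrt x < 2 ^ S j ->
  EH_discrepancy (/ (1 + delta)) (C + 4) K x0 ->
  sumR (nats_le x) (fun n => ind (in_block delta eps x j n))
  <= 8 * K / eps * x / (Rpower (ln (2 ^ S j)) C * ln (2 ^ S j) ^ 2).
Proof.
  intros Hd He Hx Hx0 HX HEH.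
  pose proof (sqrt_ge_2 x Hx).
  assert (HX4 : 4 <= 2 ^ S j).
  { destruct j as [|j]; [simpl in HX; lra|].
    pose proof (pow_R1_Rle 2 j ltac:(lra)). simpl. lra. }
  pose proof (HEH (2 ^ S j) ltac:(lra) _
                (fun k => block_level_bounds delta eps x j k Hd He Hx)) as HEHX.
  pose proof (block_count_threshold_le delta eps x j Hd He Hx) as Hcount.
  set (X := 2 ^ S j) in *.
  assert (HlX : 1 <= ln X) by (apply ln_ge_1; lra).
  assert (HP : Rpower (ln X) (C + 4) = Rpower (ln X) C * ln X ^ 4).
  { rewrite Rpower_plus. replace 4 with (INR 4) at 1 by (simpl; lra).
    rewrite Rpower_pow by lra. reflexivity. }
  assert (HPC : 0 < Rpower (ln X) C) by apply exp_pos.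
  rewrite HP in HEHX.
  apply (Rmult_le_reg_l (eps * X / (8 * x * ln X ^ 2))); [apply Rdiv_lt_0_compat; nra|].
  eapply Rle_trans; [exact Hcount|]. eapply Rle_trans; [exact HEHX|].
  right. field. repeat split; nra.
Qed.

Lemma block_empty delta eps x j : 0 < delta -> 0 < eps -> 4 <= x -> 2 ^ S j <= sqrt x ->
  sumR (nats_le x) (fun n => ind (in_block delta eps x j n)) = 0.
Proof.
  intros Hd He Hx HX. apply sumR_zero. intros n _. unfold ind.
  destruct (in_block delta eps x j n) eqn:Hb; [exfalso|reflexivity].
  destruct (in_block_spec delta eps x j n Hd He Hx Hb) as [Hn [Hs [[HT _] [_ [_ HW]]]]].
  assert (2 <= INR n) by (replace 2 with (INR 2) by (simpl; lra); apply le_INR; lia).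
  assert (INR n <= Rpower (INR n) (1 + delta)) by (apply Rpower_ge_base; lra). lra.
Qed.

Lemma ln_sqrt x : 0 < x -> ln (sqrt x) = ln x / 2.
Proof.
  intros Hx. rewrite <- (sqrt_sqrt x) at 2 by lra.
  rewrite ln_mult by (apply sqrt_lt_R0; lra). field.
Qed.

(* [ln 2^(j+1) >= ln x / 2] and [1 / (j+1)^2 <= 2 (1/(j+1) - 1/(j+2))]. *)
Lemma dyadic_weight_le C x j : 0 <= C -> 4 <= x -> sqrt x < 2 ^ S j ->
  / (Rpower (ln (2 ^ S j)) C * ln (2 ^ S j) ^ 2)
  <= 2 * Rpower 2 C / ln 2 ^ 2 / Rpower (ln x) C * (/ INR (S j) - / INR (S (S j))).
Proof.
  intros HC Hx HX.
  assert (Hl2 : 0 < ln 2) by (rewrite <- ln_1; apply ln_increasing; lra).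
  assert (Hlx : 0 < ln x) by (rewrite <- ln_1; apply ln_increasing; lra).
  pose proof (sqrt_ge_2 x Hx).
  rewrite ln_pow, S_INR with (n := S j) by lra.
  set (u := INR (S j)) in *.
  assert (Hu : 1 <= u) by (unfold u; rewrite S_INR; pose proof (pos_INR j); lra).
  assert (Hlnx : ln x <= 2 * (u * ln 2)).
  { pose proof (ln_increasing _ _ (sqrt_lt_R0 x ltac:(lra)) HX) as Hln.
    rewrite ln_sqrt, ln_pow in Hln by lra. fold u in Hln. lra. }
  set (P := Rpower (ln x) C). set (R := Rpower (u * ln 2) C).
  assert (HP : 0 < P) by apply exp_pos. assert (HR : 0 < R) by apply exp_pos.
  assert (H2C : 1 <= Rpower 2 C).
  { rewrite <- (Rpower_O 2) by lra. apply Rle_Rpower; lra. }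
  assert (HPR : P <= Rpower 2 C * R).
  { unfold P, R. rewrite Rpower_mult_distr by nra. apply Rle_Rpower_l; lra. }
  assert (HuL : 0 < P * (u * ln 2) ^ 2) by (apply Rmult_lt_0_compat; nra).
  apply Rle_trans with (Rpower 2 C * / (P * (u * ln 2) ^ 2)).
  - replace (/ (R * (u * ln 2) ^ 2)) with (Rpower 2 C * / (Rpower 2 C * R * (u * ln 2) ^ 2))
      by (field; repeat split; nra).
    apply Rmult_le_compat_l; [lra|]. apply Rinv_le_contravar; [exact HuL|].
    apply Rmult_le_compat_r; nra.
  - replace (2 * Rpower 2 C / ln 2 ^ 2 / P * (/ u - / (u + 1)))
      with (Rpower 2 C * / (P * (u * ln 2) ^ 2) * (1 + (u - 1) / (u + 1)))
      by (field; repeat split; nra).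
    assert (0 <= (u - 1) / (u + 1)) by (apply Rdiv_le_0_compat; lra).
    assert (0 < Rpower 2 C * / (P * (u * ln 2) ^ 2))
      by (apply Rmult_lt_0_compat; [lra|apply Rinv_0_lt_compat, HuL]).
    nra.
Qed.

Lemma dyadic_constant_nonneg K eps C x : 0 <= K -> 0 < eps -> 4 <= x ->
  0 <= 16 * K / eps * Rpower 2 C / ln 2 ^ 2 * x / Rpower (ln x) C.
Proof.
  intros HK He Hx.
  assert (0 < ln 2) by (rewrite <- ln_1; apply ln_increasing; lra).
  assert (0 < Rpower 2 C) by apply exp_pos. assert (0 < Rpower (ln x) C) by apply exp_pos.
  unfold Rdiv. repeat apply Rmult_le_pos; try lra; left; apply Rinv_0_lt_compat; nra.
Qed.

Lemma block_count_dyadic delta eps C K x0 x j :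
  0 < delta -> 0 < eps -> 0 <= C -> 0 <= K -> 4 <= x -> x0 <= sqrt x ->
  EH_discrepancy (/ (1 + delta)) (C + 4) K x0 ->
  sumR (nats_le x) (fun n => ind (in_block delta eps x j n))
  <= 16 * K / eps * Rpower 2 C / ln 2 ^ 2 * x / Rpower (ln x) C
     * (/ INR (S j) - / INR (S (S j))).
Proof.
  intros Hd He HC HK Hx Hx0 HEH.
  assert (Hw : 0 <= / INR (S j) - / INR (S (S j))).
  { rewrite (S_INR (S j)). pose proof (lt_0_INR (S j) ltac:(lia)).
    assert (/ (INR (S j) + 1) <= / INR (S j)) by (apply Rinv_le_contravar; lra). lra. }
  assert (Hl2 : 0 < ln 2) by (rewrite <- ln_1; apply ln_increasing; lra).
  pose proof (dyadic_constant_nonneg K eps C x HK He Hx) as HM.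
  destruct (Rlt_dec (sqrt x) (2 ^ S j)) as [HX|HX].
  - eapply Rle_trans; [apply (block_count_le delta eps C K x0); assumption|].
    pose proof (dyadic_weight_le C x j HC Hx HX) as Hdy.
    replace (8 * K / eps * x / (Rpower (ln (2 ^ S j)) C * ln (2 ^ S j) ^ 2))
      with (8 * K / eps * x * / (Rpower (ln (2 ^ S j)) C * ln (2 ^ S j) ^ 2)) by reflexivity.
    replace (16 * K / eps * Rpower 2 C / ln 2 ^ 2 * x / Rpower (ln x) C
             * (/ INR (S j) - / INR (S (S j))))
      with (8 * K / eps * x * (2 * Rpower 2 C / ln 2 ^ 2 / Rpower (ln x) C
             * (/ INR (S j) - / INR (S (S j)))))
      by (assert (0 < Rpower (ln x) C) by apply exp_pos;
          field; repeat split; try (apply not_0_INR; lia); nra).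
    apply Rmult_le_compat_l; [|exact Hdy].
    unfold Rdiv. repeat apply Rmult_le_pos; try lra. left; apply Rinv_0_lt_compat; lra.
  - rewrite (block_empty delta eps x j Hd He Hx (Rnot_lt_le _ _ HX)).
    apply Rmult_le_pos; assumption.
Qed.

Lemma blocks_count_le delta eps C K x0 x J :
  0 < delta -> 0 < eps -> 0 <= C -> 0 <= K -> 4 <= x -> x0 <= sqrt x ->
  EH_discrepancy (/ (1 + delta)) (C + 4) K x0 ->
  sumR (seq 0 J) (fun j => sumR (nats_le x) (fun n => ind (in_block delta eps x j n)))
  <= 16 * K / eps * Rpower 2 C / ln 2 ^ 2 * x / Rpower (ln x) C.
Proof.
  intros Hd He HC HK Hx Hx0 HEH.
  eapply Rle_trans.
  { apply sumR_le. intros j _. apply (block_count_dyadic delta eps C K x0); assumption. }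
  rewrite sumR_scal, (sumR_telescope (fun j => / INR (S j))).
  assert (0 < / INR (S J)) by (apply Rinv_0_lt_compat, lt_0_INR; lia).
  pose proof (dyadic_constant_nonneg K eps C x HK He Hx).
  simpl INR at 1. rewrite Rinv_1. nra.
Qed.

Lemma In_list_max n l : In n l -> (n <= list_max l)%nat.
Proof.
  intros Hn. assert (H : List.Forall (fun k => k <= list_max l)%nat l) by (apply list_max_le; lia).
  rewrite List.Forall_forall in H. auto.
Qed.

Lemma exceptional_count_le_blocks delta eps x : 0 <= x ->
  exists J, INR (exceptional_count delta eps x)
    <= sqrt x + 1 + sumR (seq 0 J) (fun j => sumR (nats_le x) (fun n => ind (in_block delta eps x j n))).
Proof.
  intros Hx. exists (S (list_max (map (witness delta eps) (nats_le x)))).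
  change (exceptional_count delta eps x)
    with (length (filter (exceptional delta eps) (nats_le x))).
  rewrite INR_length_filter.
  unfold in_block. rewrite <- sumR_ind_by_label.
  2:{ intros n Hn _. apply Nat.lt_succ_r. eapply Nat.le_trans; [apply Nat.log2_le_lin; lia|].
      apply In_list_max, in_map, Hn. }
  eapply Rle_trans with (sumR (nats_le x)
    (fun n => ind (if Rle_dec (INR n) (sqrt x) then true else false)
              + ind (above_sqrt x n && exceptional delta eps n))).
  - apply sumR_le. intros n _. unfold above_sqrt, ind.
    destruct (Rle_dec (INR n) (sqrt x)), (Rlt_dec (sqrt x) (INR n)), (exceptional delta eps n);
      simpl; lra.
  - rewrite sumR_plus, nats_le_seq by exact Hx.
    pose proof (sumR_ind_le_bound (Z.to_nat (up x)) (sqrt x) (sqrt_pos x)). lra.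
Qed.

(* With [y = ln x]: [sqrt y >= 8 C] and [ln y <= 2 sqrt y] give [C ln y + ln 2 <= y / 2]. *)
Lemma Rpower_ln_le_half_sqrt_eventually C : 0 <= C ->
  exists x1, forall x, x1 <= x -> 4 <= x /\ Rpower (ln x) C <= sqrt x / 2.
Proof.
  intros HC. exists (Rmax 4 (exp (64 * C ^ 2 + 4))). intros x Hx.
  pose proof (Rmax_l 4 (exp (64 * C ^ 2 + 4))). pose proof (Rmax_r 4 (exp (64 * C ^ 2 + 4))).
  split; [lra|].
  assert (Hy : 64 * C ^ 2 + 4 <= ln x).
  { rewrite <- (ln_exp (64 * C ^ 2 + 4)). apply ln_le; [apply exp_pos|lra]. }
  set (y := ln x) in *.
  assert (Hsy : 8 * C <= sqrt y).
  { rewrite <- (sqrt_square (8 * C)) by lra. apply sqrt_le_1_alt. unfold Rsqr. nra. }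
  assert (Hly : ln y <= 2 * sqrt y).
  { rewrite <- (sqrt_sqrt y) at 1 by nra. rewrite ln_mult by (apply sqrt_lt_R0; nra).
    pose proof (exp_ineq1_le (ln (sqrt y))) as Hs.
    rewrite exp_ln in Hs by (apply sqrt_lt_R0; nra). lra. }
  assert (Hl2 : ln 2 <= 1).
  { pose proof (exp_ineq1_le (ln 2)) as H2. rewrite exp_ln in H2; lra. }
  assert (Hyy : sqrt y * sqrt y = y) by (apply sqrt_sqrt; nra).
  assert (Key : C * ln y + ln 2 <= y / 2) by nra.
  rewrite <- Rpower_sqrt by lra. unfold Rpower.
  replace (exp (/ 2 * ln x)) with (exp (C * ln y + ln 2) * exp (/ 2 * ln x - (C * ln y + ln 2)))
    by (rewrite <- exp_plus; f_equal; ring).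
  rewrite exp_plus, exp_ln by lra.
  assert (1 <= exp (/ 2 * ln x - (C * ln y + ln 2))).
  { pose proof (exp_ineq1_le (/ 2 * ln x - (C * ln y + ln 2))) as He. fold y in He.
    change (1 <= exp (/ 2 * y - (C * ln y + ln 2))). lra. }
  pose proof (exp_pos (C * ln y)). nra.
Qed.

Theorem proposition2 (delta C : R) :
  0 < delta -> 3 <= C -> EH ->
  forall eps : R, 0 < eps ->
  exists K x0 : R, forall x : R, x0 <= x ->
    INR (exceptional_count delta eps x) <= K * x / Rpower (ln x) C.
Proof.
  intros Hd HC HEH eps He.
  assert (Hc : 0 < / (1 + delta) < 1).
  { split; [apply Rinv_0_lt_compat; lra|]. rewrite <- Rinv_1. apply Rinv_lt_contravar; lra. }
  destruct (EH_discrepancy_bound _ (C + 4) HEH Hc ltac:(lra)) as [K [x0 [HK HEHK]]].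
  destruct (Rpower_ln_le_half_sqrt_eventually C ltac:(lra)) as [x1 Hx1].
  set (M := 16 * K / eps * Rpower 2 C / ln 2 ^ 2).
  exists (1 + M), (Rmax x1 (x0 * x0)). intros x Hx.
  pose proof (Rmax_l x1 (x0 * x0)). pose proof (Rmax_r x1 (x0 * x0)).
  destruct (Hx1 x ltac:(lra)) as [Hx4 HP].
  assert (Hx0 : x0 <= sqrt x).
  { eapply Rle_trans; [apply Rle_abs|]. rewrite <- sqrt_Rsqr_abs.
    apply sqrt_le_1_alt. unfold Rsqr. lra. }
  destruct (exceptional_count_le_blocks delta eps x ltac:(lra)) as [J HJ].
  pose proof (blocks_count_le delta eps C K x0 x J Hd He ltac:(lra) HK Hx4 Hx0 HEHK) as HB.
  fold M in HB. set (P := Rpower (ln x) C) in *. assert (0 < P) by apply exp_pos.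
  assert (Hsq : sqrt x + 1 <= x / P).
  { apply (Rmult_le_reg_r P); [lra|]. unfold Rdiv. rewrite Rmult_assoc, Rinv_l, Rmult_1_r by lra.
    pose proof (sqrt_sqrt x ltac:(lra)). pose proof (sqrt_ge_2 x Hx4). nra. }
  replace ((1 + M) * x / P) with (x / P + M * x / P) by (field; lra). lra.
Qed.
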